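(* Let $q$ be a prime power, $F=\mathbb{F}_{q^2}$, $m\ge1$ with $\gcd(q,m)=1$, and $R=F[x]/\langle x^m-1\rangle$. Let $C\subseteq R^2$ be the quasi-cyclic code generated by one element $(g_{11}(x),g_{12}(x))$, where $g_{11}(x)\mid x^m-1$ and $\deg g_{12}<m$. Let $g(x)=\gcd(g_{11}(x),g_{12}(x))$. Then $C$ is Hermitian LCD if and only if $$\gcd\left(\frac{x^m-1}{g(x)},\ g_{11}(x)\hat g_{11}(x)+g_{12}(x)\hat g_{12}(x)\right)=1.$$
   Context: Elements of $R$ are represented by polynomials of degree $<m$ and identified with their coefficient vectors in $F^m$; a quasi-cyclic code of length $2m$ and index 2 is an $R$-submodule of $R^2$. The Hermitian inner product of $(a_1,a_2),(b_1,b_2)\in R^2$ is $\sum_k a_{1,k}b_{1,k}^q+\sum_k a_{2,k}b_{2,k}^q$, where $a_{i,k},b_{i,k}$ are the coefficients of $x^k$; $C$ is Hermitian LCD if $C\cap C^{\perp_h}=\{0\}$. For $f=\sum f_kx^k\in F[x]$ of degree at most $m$, $\hat f(x)=x^m f^{[q]}(x^{-1})$, where $f^{[q]}=\sum f_k^q x^k$. *)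

From HB Require Import structures.
From mathcomp Require Import all_boot all_order all_algebra all_field.
Set Implicit Arguments. Unset Strict Implicit. Unset Printing Implicit Defensive.
Import GRing.Theory.
Local Open Scope ring_scope.

(* R = F[x]/<x^m - 1>: elements represented by polynomials of degree < m,
   i.e. by their remainder modulo x^m - 1. *)
Definition xm1 (F : fieldType) (m : nat) : {poly F} := 'X^m - 1.

Definition qc_code1 (F : fieldType) (m : nat) (g1 g2 : {poly F})
    (c : {poly F} * {poly F}) : Prop :=
  exists a : {poly F}, c = ((a * g1) %% xm1 F m, (a * g2) %% xm1 F m).

Definition herm_ip (F : fieldType) (q m : nat) (c d : {poly F} * {poly F}) : F :=
  \sum_(k < m) c.1`_k * (d.1`_k) ^+ q + \sum_(k < m) c.2`_k * (d.2`_k) ^+ q.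

Definition inR2 (F : fieldType) (m : nat) (c : {poly F} * {poly F}) : Prop :=
  (size c.1 <= m)%N /\ (size c.2 <= m)%N.

Definition herm_dual (F : fieldType) (q m : nat)
    (C : {poly F} * {poly F} -> Prop) (c : {poly F} * {poly F}) : Prop :=
  inR2 m c /\ forall d, C d -> herm_ip q m c d = 0.

Definition herm_LCD (F : fieldType) (q m : nat)
    (C : {poly F} * {poly F} -> Prop) : Prop :=
  forall c, C c -> herm_dual q m C c -> c = (0, 0).

(* \hat f (x) = x^m f^{[q]}(x^{-1}) for deg f <= m:
   coefficient of x^i is (f_{m-i})^q, for 0 <= i <= m. *)
Definition hatp (F : fieldType) (q m : nat) (f : {poly F}) : {poly F} :=
  \poly_(i < m.+1) (f`_(m - i) ^+ q).

From HB Require Import structures.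
From mathcomp Require Import all_boot all_order all_algebra all_field.
From mathcomp Require Import ring.
Set Implicit Arguments. Unset Strict Implicit. Unset Printing Implicit Defensive.
Import GRing.Theory.
Local Open Scope ring_scope.

(* In R = F[x]/(x^m - 1) let a |-> conj(a) be the ring automorphism raising the
   coefficients to the q-th power and sending x to x^-1 = x^(m-1).  The Hermitian
   form is <c, d> = constant term of c1 conj(d1) + c2 conj(d2); it is
   nondegenerate, and hat(a) = conj(a) in R.  For codewords a(g1, g2) and
   b(g1, g2) the form is thus the constant term of conj(b) a T, where
   T = g1 conj(g1) + g2 conj(g2), so a(g1, g2) is in the dual iff x^m - 1 | a T.
   With g = gcd(g1, g2) and h = (x^m - 1)/g, the codeword a(g1, g2) vanishes iff
   h | a; hence C is LCD iff h g | a T always forces h | a.  As m is prime to the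
   characteristic, x^m - 1 is separable, h and g are coprime, and this cancellation
   property is equivalent to gcd(h, T) = 1. *)

Section PolyCongruence.
Variables (R : fieldType) (d : {poly R}).

Lemma dvdp_subD p p' r r' :
  d %| p - p' -> d %| r - r' -> d %| (p + r) - (p' + r').
Proof. by move=> dp dr; rewrite opprD addrACA; apply: dvdp_add. Qed.

Lemma dvdp_subMl r p p' : d %| p - p' -> d %| r * p - r * p'.
Proof. by move=> dp; rewrite -mulrBr dvdp_mull. Qed.

Lemma dvdp_subM p p' r r' :
  d %| p - p' -> d %| r - r' -> d %| p * r - p' * r'.
Proof.
move=> dp dr; rewrite -(subrK (p' * r) (p * r)) -addrA -mulrBl -mulrBr.
by apply: dvdp_add; [apply: dvdp_mulr | apply: dvdp_mull].
Qed.

Lemma dvdp_sub_modp p : d %| p %% d - p.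
Proof. by rewrite {2}(divp_eq p d) opprD addrCA subrr addr0 dvdpNr dvdp_mull. Qed.

Lemma modp_dvdp_sub p p' : d %| p - p' -> p %% d = p' %% d.
Proof. by move=> dp; rewrite -(subrK p' p) modpD (modp_eq0 dp) add0r. Qed.

Lemma coprimep_dvdp_sub p p' : d %| p - p' -> coprimep d p = coprimep d p'.
Proof. by move=> dp; rewrite -coprimep_modr (modp_dvdp_sub dp) coprimep_modr. Qed.

End PolyCongruence.

Lemma cancel_dvdp_mul_coprimep (R : fieldType) (h g t : {poly R}) :
  h != 0 -> coprimep h g ->
  (forall a, h * g %| a * t -> h %| a) <-> coprimep h t.
Proof.
move=> h0 hg; split=> [cancel_t | ht a /(dvdp_trans (dvdp_mulr g (dvdpp h)))].
  set c := gcdp h t.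
  have hc : h %/ c * c = h by rewrite divpK ?dvdp_gcdl.
  have hc0 : h %/ c != 0 by apply: contraNneq h0 => e; rewrite -hc e mul0r.
  have : h %| h %/ c * g.
    have tc : t %/ c * c = t by rewrite divpK ?dvdp_gcdr.
    apply: cancel_t; rewrite -{1}hc -tc; apply/dvdpP; exists (t %/ c); ring.
  rewrite Gauss_dvdpl // -{1}hc -[X in _ %| X]mul1r [_ * c]mulrC dvdp_mul2r //.
  by rewrite /coprimep -/c dvdp1.
by rewrite Gauss_dvdpl.
Qed.

Lemma dvdp_mul2_gcd (R : fieldType) (d g1 g2 a : {poly R}) :
  gcdp g1 g2 != 0 -> gcdp g1 g2 %| d ->
  (d %| a * g1) && (d %| a * g2) = (d %/ gcdp g1 g2 %| a).
Proof.
move=> g0 gd; rewrite -dvdp_gcd (eqp_dvdr _ (gcdp_mul2l _ _ _)).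
by rewrite -{1}(divpK gd) dvdp_mul2r.
Qed.

Lemma mul_predn_addn m i : (0 < m)%N -> (i * m.-1 + i = i * m)%N.
Proof. by move=> m_gt0; rewrite -mulnSr prednK. Qed.

Lemma addn_mul_predn_mod_eq0 m k i : (k < m)%N -> (i < m)%N ->
  (((k + i * m.-1) %% m)%N == 0%N) = (k == i).
Proof.
move=> km im; have m_gt0 : (0 < m)%N by apply: leq_ltn_trans km.
apply/idP/eqP => [/eqP k_eq|->]; last by rewrite addnC mul_predn_addn // modnMl.
have : ((k + i * m.-1 + i) %% m = i)%N by rewrite -modnDml k_eq add0n modn_small.
by rewrite -addnA mul_predn_addn // addnC modnMDl modn_small.
Qed.

Lemma sum_coefXn (R : nzRingType) (p : {poly R}) N :
  (size p <= N)%N -> \sum_(k < N) p`_k *: 'X^k = p.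
Proof.
move=> pN; rewrite -poly_def; apply/polyP=> j; rewrite coef_poly.
by case: ltnP => // jN; rewrite nth_default // (leq_trans pN jN).
Qed.

Section CyclicQuotient.
Variables (F : fieldType) (m : nat).
Hypothesis m_gt0 : (0 < m)%N.

Local Notation n := (xm1 F m).

Lemma size_xm1 : size n = m.+1.
Proof. by rewrite /xm1 size_XnsubC. Qed.

Lemma xm1_neq0 : n != 0.
Proof. by rewrite -size_poly_eq0 size_xm1. Qed.

Lemma size_modp_xm1 p : (size (p %% n)%R <= m)%N.
Proof. by rewrite -ltnS -size_xm1 ltn_modp xm1_neq0. Qed.

Lemma dvdp_xm1_subXn_mod a : n %| 'X^a - 'X^(a %% m).
Proof.
rewrite {1}(divn_eq a m) exprD mulnC exprM -{2}['X^(a %% m)]mul1r -mulrBl.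
by rewrite dvdp_mulr // -(expr1n _ (a %/ m)) subrXX dvdp_mulr.
Qed.

Lemma dvdp_xm1_subXn a b : (a = b %[mod m])%N -> n %| 'X^a - 'X^b.
Proof.
move=> ab; have := dvdp_sub (dvdp_xm1_subXn_mod a) (dvdp_xm1_subXn_mod b).
by rewrite ab opprB addrA subrK.
Qed.

Definition cterm (p : {poly F}) : F := (p %% n)`_0.

Lemma cterm_cong p p' : n %| p - p' -> cterm p = cterm p'.
Proof. by move=> pp'; rewrite /cterm (modp_dvdp_sub pp'). Qed.

Lemma ctermD p r : cterm (p + r) = cterm p + cterm r.
Proof. by rewrite /cterm modpD coefD. Qed.

Lemma cterm0 : cterm 0 = 0.
Proof. by rewrite /cterm mod0p coef0. Qed.

Lemma ctermZ c p : cterm (c *: p) = c * cterm p.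
Proof. by rewrite /cterm modpZl coefZ. Qed.

Lemma cterm_sum I (r : seq I) (P : pred I) (G : I -> {poly F}) :
  cterm (\sum_(i <- r | P i) G i) = \sum_(i <- r | P i) cterm (G i).
Proof. exact: (big_morph cterm ctermD cterm0). Qed.

Lemma ctermXn a : cterm 'X^a = ((a %% m)%N == 0%N)%:R.
Proof.
rewrite (cterm_cong (dvdp_xm1_subXn_mod a)) /cterm modp_small ?coefXn 1?eq_sym //.
by rewrite size_polyXn size_xm1 ltnS ltn_pmod.
Qed.

Variable f : {rmorphism F -> F}.

(* [x^(m-1)] is the inverse of [x] in R. *)
Definition conjrev : {poly F} -> {poly F} := comp_poly ('X^(m.-1)) \o map_poly f.
HB.instance Definition _ := GRing.RMorphism.on conjrev.

Lemma conjrev_dvdp p : n %| p -> n %| conjrev p.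
Proof.
case/dvdpP=> r ->; rewrite rmorphM dvdp_mull //= /xm1 rmorphB rmorph1 /=.
rewrite /conjrev /= map_polyXn comp_Xn_poly -exprM -(expr0 'X) dvdp_xm1_subXn //.
by rewrite modnMl mod0n.
Qed.

Lemma conjrev_cong p p' : n %| p - p' -> n %| conjrev p - conjrev p'.
Proof. by rewrite -rmorphB; apply: conjrev_dvdp. Qed.

Lemma conjrev_sum (d : {poly F}) N : (size d <= N)%N ->
  conjrev d = \sum_(i < N) f d`_i *: 'X^(i * m.-1).
Proof.
move=> dN; rewrite /conjrev /= comp_polyE size_map_poly.
rewrite (big_ord_widen N (fun i => (map_poly f d)`_i *: 'X^(m.-1) ^+ i) dN).
rewrite big_mkcond; apply: eq_bigr => i _ /=; case: ifP => id.
  by rewrite coef_map -exprM mulnC.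
by rewrite nth_default ?rmorph0 ?scale0r // leqNgt id.
Qed.

Lemma sum_coef_mul_conjrev (c d : {poly F}) : (size c <= m)%N -> (size d <= m)%N ->
  \sum_(k < m) c`_k * f d`_k = cterm (c * conjrev d).
Proof.
move=> cm dm; rewrite (conjrev_sum dm) -{2}(sum_coefXn cm) mulr_suml cterm_sum.
apply: eq_bigr => k _; rewrite mulr_sumr cterm_sum (bigD1 k) //= big1 ?addr0.
  by rewrite -scalerAl -scalerAr scalerA -exprD ctermZ ctermXn
    addn_mul_predn_mod_eq0 // eqxx mulr1.
move=> i ik; rewrite -scalerAl -scalerAr scalerA -exprD ctermZ ctermXn.
by rewrite addn_mul_predn_mod_eq0 // eq_sym [_ == _](negbTE ik) mulr0.
Qed.

Lemma cterm_conjrev_nondeg U : (forall b, cterm (conjrev b * U) = 0) -> n %| U.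
Proof.
move=> U_orth; apply/modp_eq0P/polyP => j; rewrite coef0.
have Um := size_modp_xm1 U.
case: (ltnP j m) => jm; last by rewrite nth_default // (leq_trans Um jm).
rewrite -[in RHS](U_orth 'X^j).
have -> : cterm (conjrev 'X^j * U) = cterm (U %% n * conjrev 'X^j).
  by apply: cterm_cong; rewrite mulrC -mulrBl dvdp_mulr // -dvdpNr opprB dvdp_sub_modp.
rewrite -sum_coef_mul_conjrev ?size_polyXn // (bigD1 (Ordinal jm)) //= big1.
  by rewrite coefXn eqxx rmorph1 mulr1 addr0.
move=> i ij; rewrite coefXn.
by rewrite (_ : (i == j :> nat) = false) ?rmorph0 ?mulr0 //; apply: negbTE ij.
Qed.

Lemma hatp_conjrev_cong q (fE : forall x, f x = x ^+ q) (g : {poly F}) :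
  (size g <= m.+1)%N -> n %| hatp q m g - conjrev g.
Proof.
move=> gm; rewrite /hatp poly_def (conjrev_sum gm) (reindex_inj rev_ord_inj) /=.
rewrite -sumrB; apply: (big_ind (fun p => n %| p)) => [|x y|i _].
- exact: dvdp0.
- exact: dvdp_add.
rewrite subSS subKn ?leq_ord // -fE -scalerBr -mul_polyC dvdp_mull //.
apply: dvdp_xm1_subXn; apply/eqP; rewrite -(eqn_modDr i) subnK ?leq_ord //.
by rewrite mul_predn_addn // modnn modnMl.
Qed.

End CyclicQuotient.

Section QuasiCyclicCode.
Variables (F : fieldType) (m q : nat) (f : {rmorphism F -> F}).
Hypotheses (m_gt0 : (0 < m)%N) (fE : forall x, f x = x ^+ q).
Variables g1 g2 : {poly F}.

Local Notation n := (xm1 F m).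
Local Notation conjrev := (conjrev m f).
Local Notation T := (g1 * conjrev g1 + g2 * conjrev g2).

Lemma herm_ip_qc_code a b :
  herm_ip q m ((a * g1) %% n, (a * g2) %% n) ((b * g1) %% n, (b * g2) %% n) =
  cterm m (conjrev b * (a * T)).
Proof.
rewrite /herm_ip /=; under eq_bigr do rewrite -fE.
under [X in _ + X]eq_bigr do rewrite -fE.
rewrite !sum_coef_mul_conjrev ?size_modp_xm1 // -ctermD.
have -> : conjrev b * (a * T) =
    a * g1 * conjrev (b * g1) + a * g2 * conjrev (b * g2) by rewrite !rmorphM; ring.
apply: cterm_cong; apply: dvdp_subD; apply: dvdp_subM;
  by [apply: dvdp_sub_modp | apply: conjrev_cong; apply: dvdp_sub_modp].
Qed.

Lemma herm_LCD_qc_codeP : g1 %| n ->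
  herm_LCD q m (qc_code1 m g1 g2) <->
  (forall a, n %| a * T -> n %/ gcdp g1 g2 %| a).
Proof.
move=> g1n; have g0 : gcdp g1 g2 != 0.
  by rewrite gcdp_eq0 negb_and (dvdpN0 g1n) ?xm1_neq0.
have codeword0 a :
    (((a * g1) %% n, (a * g2) %% n) == (0, 0)) = (n %/ gcdp g1 g2 %| a).
  by rewrite -dvdp_mul2_gcd ?(dvdp_trans (dvdp_gcdl _ _)) // xpair_eqE.
split=> [LCD a naT | cancelT c [a ->] [_ c_orth]].
  rewrite -codeword0; apply/eqP/LCD; first by exists a.
  split=> [|_ [b ->]]; first by split; apply: size_modp_xm1.
  by rewrite herm_ip_qc_code (@cterm_cong _ _ _ 0) ?cterm0 // subr0 dvdp_mull.
apply/eqP; rewrite codeword0; apply/cancelT/(cterm_conjrev_nondeg m_gt0 (f := f)) => b.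
by rewrite -herm_ip_qc_code; apply: c_orth; exists b.
Qed.

Lemma herm_LCD_qc_code_coprimep : m%:R != 0 :> F -> g1 %| n -> (size g2 <= m)%N ->
  herm_LCD q m (qc_code1 m g1 g2) <->
  coprimep (n %/ gcdp g1 g2) (g1 * hatp q m g1 + g2 * hatp q m g2).
Proof.
move=> m_neq0 g1n g2m; set g := gcdp g1 g2; set h := n %/ g.
have hg : h * g = n by rewrite divpK // (dvdp_trans (dvdp_gcdl _ _)).
have h0 : h != 0 by apply: contraNneq (xm1_neq0 F m_gt0) => h0; rewrite -hg h0 mul0r.
have hg_coprime : coprimep h g.
  by case/separable_polyP: (separable_Xn_sub_1 m_neq0) => + _; apply; rewrite hg.
have hat_T : h %| (g1 * hatp q m g1 + g2 * hatp q m g2) - T.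
  apply: (dvdp_trans (dvdp_mulr g (dvdpp h))); rewrite hg.
  apply: dvdp_subD; apply: dvdp_subMl; apply: hatp_conjrev_cong => //.
    by rewrite -(size_xm1 F m_gt0) dvdp_leq ?xm1_neq0.
  exact: leqW.
rewrite (coprimep_dvdp_sub hat_T) herm_LCD_qc_codeP // -/g -/h -hg.
exact: cancel_dvdp_mul_coprimep.
Qed.

End QuasiCyclicCode.

Section FrobeniusPower.
Variables (F : fieldType) (p k : nat).
Hypothesis pF : p \in [pchar F].

Definition frobenius_pow (x : F) := x ^+ (p ^ k).

Lemma frobenius_powD x y : frobenius_pow (x + y) = frobenius_pow x + frobenius_pow y.
Proof.
apply: exprDn_pchar.
by rewrite (eq_pnat _ (pcharf_eq pF)) pnatX pnat_id ?(pcharf_prime pF).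
Qed.

Fact frobenius_pow_is_zmod_morphism : zmod_morphism frobenius_pow.
Proof.
by move=> x y; apply: (addIr (frobenius_pow y)); rewrite -frobenius_powD !subrK.
Qed.

Fact frobenius_pow_is_monoid_morphism : monoid_morphism frobenius_pow.
Proof. by split=> [|x y]; rewrite /frobenius_pow ?expr1n ?exprMn. Qed.

HB.instance Definition _ := GRing.isZmodMorphism.Build F F frobenius_pow
  frobenius_pow_is_zmod_morphism.
HB.instance Definition _ := GRing.isMonoidMorphism.Build F F frobenius_pow
  frobenius_pow_is_monoid_morphism.

(* The instances above depend on [pF], so they are not found by inference
   outside this section; the morphism is packaged once and for all here. *)
Definition frobenius_pow_rmorphism : {rmorphism F -> F} := frobenius_pow.

End FrobeniusPower.

Theorem theorem6p4 (q : nat) (F : finFieldType) (m : nat)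
    (g11 g12 : {poly F}) :
  (exists p k : nat, prime p /\ (0 < k)%N /\ q = (p ^ k)%N) ->
  #|F| = (q ^ 2)%N ->
  (1 <= m)%N ->
  coprime q m ->
  g11 %| xm1 F m ->
  (size g12 <= m)%N ->
  herm_LCD q m (qc_code1 m g11 g12) <->
  coprimep (xm1 F m %/ gcdp g11 g12)
           (g11 * hatp q m g11 + g12 * hatp q m g12).
Proof.
move=> [p [k [p_prime [k_gt0 ->]]]] cardF m_gt0 coprime_qm g11_dvd g12_size.
have pF : p \in [pchar F].
  by apply: (@card_finPcharP _ p (k * 2)); rewrite // cardF expnM.
have m_neq0 : m%:R != 0 :> F.
  by rewrite -(dvdn_pcharf pF) -prime_coprime // -(coprime_pexpl _ _ k_gt0).
exact: (herm_LCD_qc_code_coprimep (f := frobenius_pow_rmorphism k pF) m_gt0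
  (fun=> erefl) m_neq0 g11_dvd g12_size).
Qed.
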